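(* Let $g_{ii}(u)$ be a metric of the strictly hyperbolic DN system $u^i_t=v^i(u)u^i_x$, $i=1,\dots,n$, whose curvature tensor has the special form $$R^{ik}_{ik}=w^i_{(1)}+w^k_{(1)}+w^i_{(2)}v^k+w^k_{(2)}v^i,\qquad i\neq k,$$ where $w^i_{(1)},w^i_{(2)}$ are affinors of $g$. Let $B_t=A_x$, $N_t=M_x$ be conservation laws with $BM-AN\neq 0$, and consider the reciprocal transformation $d\hat x=B\,dx+A\,dt$, $d\hat t=N\,dx+M\,dt$. Let $T^{(l)},Z^{(l)}$ ($l=1,2$) be functions with $\partial_iT^{(l)}=w^i_{(l)}\partial_iB$ and $\partial_iZ^{(l)}=w^i_{(l)}\partial_iN$ for all $i$. Define $$n^i=\nabla^i\nabla_iN+w^i_{(1)}N+Z^{(1)}+w^i_{(2)}M+v^iZ^{(2)},\qquad b^i=\nabla^i\nabla_iB+w^i_{(1)}B+T^{(1)}+w^i_{(2)}A+v^iT^{(2)},$$ $$Q=\tfrac12(\nabla B)^2+BT^{(1)}+AT^{(2)},\qquad \mathcal R=\tfrac12(\nabla N)^2+NZ^{(1)}+MZ^{(2)},$$ and let $P,S$ be functions with $$P+S=\langle\nabla N,\nabla B\rangle+T^{(1)}N+T^{(2)}M+Z^{(1)}B+Z^{(2)}A.$$ Set $$\hat n^i=\frac{H_i}{\hat H_i}n^i-P-\hat v^i\mathcal R,\qquad \hat b^i=\frac{H_i}{\hat H_i}b^i-Q-\hat v^iS,$$ where $\hat H_i=\sqrt{\hat g_{ii}}$, so that $H_i/\hat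 H_i=(BM-AN)/(M-Nv^i)$. Then the only possibly nonzero components of the Riemannian curvature tensor of the reciprocal metric $\hat g_{ii}$ are $$\hat R^{ik}_{ik}=\hat n^i\hat v^k+\hat n^k\hat v^i+\hat b^i+\hat b^k,\qquad i\neq k.$$
   Context: Setting: $u=(u^1,\dots,u^n)$ and $u^i_t=v^i(u)u^i_x$, $i=1,\dots,n$, is a hydrodynamic type system in Riemann invariants with smooth real, pairwise distinct characteristic velocities $v^i$ (strict hyperbolicity). We work with smooth rapidly decreasing functions of $x$, so that $(d/dx)^{-1}f_x=f$. The system is an integrable Dubrovin–Novikov (DN) system, i.e. it has a local Hamiltonian structure of hydrodynamic type defined by a flat non-degenerate diagonal metric. Write $\partial_i=\partial/\partial u^i$. A metric of the system is a non-degenerate diagonal metric $g_{ii}(u)$ such that, for suitable functions $f^i(u^i)$ of one variable, $f^ig_{ii}$ is a flat metric of a local Hamiltonian structure of the system. Equivalently, its Lamé coefficients $H_i=\sqrt{g_{ii}}$ satisfy $\partial_j\ln H_i=\partial_jv^i/(v^j-v^i)$ for $i\neq j$. We write $g^{ii}=1/g_{ii}$, and $\Gamma^i_{jk}$ for the Christoffel symbols. For such a metric, the only possibly nonzero curvature components are $R^{ik}_{ik}$, $i\neq k$. An affinor of $g$ is a function $w^i(u)$ with $\partial_jw^i/(w^j-w^i)=\partial_j\ln H_i$ for all $i\neq j$. Conservation law: a pair of functions with $B(u)_t=A(u)_x$ on solutions, i.e. $\partial_iA=v^i\partial_iB$ for all $i$. Reciprocal transformation: $d\hat x=B\,dx+A\,dt$,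 $d\hat t=N\,dx+M\,dt$. The reciprocal system is $u^i_{\hat t}=\hat v^iu^i_{\hat x}$ with $$\hat v^i=\frac{Bv^i-A}{M-Nv^i},$$ and the reciprocal metric is $$\hat g_{ii}=\Big(\frac{M-Nv^i}{BM-AN}\Big)^2g_{ii}.$$ Notation: - $(\nabla B)^2=\sum_mg^{mm}(\partial_mB)^2$; - $\langle\nabla B,\nabla N\rangle=\sum_mg^{mm}\partial_mB\,\partial_mN$; - $\nabla^i\nabla_iB=g^{ii}\big(\partial_i^2B-\sum_m\Gamma^m_{ii}\partial_mB\big)$ (no summation over $i$). *)

From Stdlib Require Import Reals Lra List Arith ClassicalEpsilon.
Import ListNotations.
Open Scope R_scope.

(* Points of R^n are represented as [nat -> R]; only the coordinates
   0..n-1 are ever varied. *)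
Definition pt := nat -> R.
Definition fn := pt -> R.

Definition upd (u : pt) (i : nat) (t : R) : pt :=
  fun j => if Nat.eqb j i then t else u j.

Definition ex_pd (i : nat) (f : fn) (u : pt) : Prop :=
  exists l, derivable_pt_lim (fun t => f (upd u i t)) (u i) l.

(* the partial derivative (its value when it exists; chosen by epsilon) *)
Definition pd (i : nat) (f : fn) : fn :=
  fun u => epsilon (inhabits 0)
             (fun l => derivable_pt_lim (fun t => f (upd u i t)) (u i) l).

Fixpoint iter_pd (l : list nat) (f : fn) : fn :=
  match l with
  | [] => f
  | i :: l' => pd i (iter_pd l' f)
  end.

Definition near (n : nat) (u : pt) (delta : R) (u' : pt) : Prop :=
  (forall i, (i < n)%nat -> Rabs (u' i - u i) < delta) /\
  (forall i, (n <= i)%nat -> u' i = u i).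

Definition open_dom (n : nat) (D : pt -> Prop) : Prop :=
  forall u, D u -> exists delta, delta > 0 /\ forall u', near n u delta u' -> D u'.

Definition cont_at (n : nat) (D : pt -> Prop) (F : fn) (u : pt) : Prop :=
  forall eps, eps > 0 -> exists delta, delta > 0 /\
    forall u', near n u delta u' -> D u' -> Rabs (F u' - F u) < eps.

Definition smooth (n : nat) (D : pt -> Prop) (f : fn) : Prop :=
  forall l, Forall (fun i => (i < n)%nat) l -> forall u, D u ->
    cont_at n D (iter_pd l f) u /\
    (forall i, (i < n)%nat -> ex_pd i (iter_pd l f) u).

Definition sumR (n : nat) (f : nat -> R) : R :=
  fold_right (fun m acc => f m + acc) 0 (seq 0 n).

(* A diagonal metric is given by its diagonal entries g i = g_ii. *)
Definition Gamma (g : nat -> fn) (m j k : nat) : fn :=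
  fun u => / (2 * g m u) *
    ((if Nat.eqb m k then pd j (g m) u else 0)
     + (if Nat.eqb m j then pd k (g m) u else 0)
     - (if Nat.eqb j k then pd m (g j) u else 0)).

Definition Riem (n : nat) (g : nat -> fn) (i j k l : nat) : fn :=
  fun u => pd k (Gamma g i l j) u - pd l (Gamma g i k j) u
    + sumR n (fun m => Gamma g i k m u * Gamma g m l j u
                       - Gamma g i l m u * Gamma g m k j u).

(* R^{ik}_{ik} = g^{kk} R^i_{kik}  (= sectional curvature of the (i,k) plane) *)
Definition Rik (n : nat) (g : nat -> fn) (i k : nat) : fn :=
  fun u => Riem n g i k i k u / g k u.

Definition nondeg (n : nat) (D : pt -> Prop) (g : nat -> fn) : Prop :=
  forall i u, (i < n)%nat -> D u -> g i u <> 0.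

Definition flat (n : nat) (D : pt -> Prop) (g : nat -> fn) : Prop :=
  forall i j k l u, (i < n)%nat -> (j < n)%nat -> (k < n)%nat -> (l < n)%nat ->
    D u -> Riem n g i j k l u = 0.

Definition strictly_hyperbolic (n : nat) (D : pt -> Prop) (v : nat -> fn) : Prop :=
  forall i j u, (i < n)%nat -> (j < n)%nat -> i <> j -> D u -> v i u <> v j u.

(* d_j ln H_i, with H_i = sqrt g_ii *)
Definition dlnH (g : nat -> fn) (j i : nat) : fn :=
  fun u => pd j (g i) u / (2 * g i u).

(* g is a metric of the system u^i_t = v^i u^i_x (Lame-coefficient form) *)
Definition metric_of_system (n : nat) (D : pt -> Prop) (v g : nat -> fn) : Prop :=
  nondeg n D g /\
  forall i j u, (i < n)%nat -> (j < n)%nat -> i <> j -> D u ->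
    dlnH g j i u = pd j (v i) u / (v j u - v i u).

Definition affinor (n : nat) (D : pt -> Prop) (g w : nat -> fn) : Prop :=
  forall i j u, (i < n)%nat -> (j < n)%nat -> i <> j -> D u ->
    pd j (w i) u = (w j u - w i u) * dlnH g j i u.

(* B_t = A_x is a conservation law:  d_i A = v^i d_i B *)
Definition conservation_law (n : nat) (D : pt -> Prop) (v : nat -> fn) (B A : fn) : Prop :=
  forall i u, (i < n)%nat -> D u -> pd i A u = v i u * pd i B u.

(* DN integrability: existence of a flat nondegenerate metric of the system *)
Definition DN_system (n : nat) (D : pt -> Prop) (v : nat -> fn) : Prop :=
  exists g0 : nat -> fn, (forall i, (i < n)%nat -> smooth n D (g0 i)) /\
    metric_of_system n D v g0 /\ flat n D g0.

Definition vhat (v : nat -> fn) (B A N M : fn) (i : nat) : fn :=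
  fun u => (B u * v i u - A u) / (M u - N u * v i u).

Definition ghat (v g : nat -> fn) (B A N M : fn) (i : nat) : fn :=
  fun u => ((M u - N u * v i u) / (B u * M u - A u * N u)) ^ 2 * g i u.

Definition Hratio (v : nat -> fn) (B A N M : fn) (i : nat) : fn :=
  fun u => (B u * M u - A u * N u) / (M u - N u * v i u).

Definition lap_i (n : nat) (g : nat -> fn) (i : nat) (f : fn) : fn :=
  fun u => / g i u * (pd i (pd i f) u - sumR n (fun m => Gamma g m i i u * pd m f u)).

Definition gradsq (n : nat) (g : nat -> fn) (f : fn) : fn :=
  fun u => sumR n (fun m => / g m u * (pd m f u) ^ 2).

Definition gradprod (n : nat) (g : nat -> fn) (f h : fn) : fn :=
  fun u => sumR n (fun m => / g m u * pd m f u * pd m h u).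

(* A diagonal metric G has Christoffel symbols, hence curvature, expressed
   through the logarithmic derivatives [dlnH G j i] = d_j ln H_i of its Lamé
   coefficients.  For such metrics we show that R^i_{jkl} vanishes when {k,l}
   avoids {i,j}, that R^i_{ikl} vanishes (symmetry of second derivatives), that
   R^i_{jjl} is a multiple of R^j_{ijl}, and we derive the classical formula
   [Rik_diag] for R^{ik}_{ik}.  The reciprocal metric is conformal entrywise,
   ghat_ii = ((M - N v^i)/(BM - AN))^2 g_ii, so its coefficients [dlnH] differ
   from those of g by a logarithmic derivative that the conservation laws make
   explicit ([dlnH_ghat]).  The components R^i_{jil} of ghat vanish by the
   Darboux equations of the rotation coefficients (inherited from the flat
   metric of the DN system) and the Tsarev identities for conserved densities;
   with the general facts above this kills every component but R^{ik}_{ik}.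
   Finally R^{ik}_{ik} of ghat is computed from [Rik_diag], the transformation
   law of the rotation coefficients ([recip_rest_sum]) and the curvature
   hypothesis on g, which eliminates w^i_(1). *)

From Stdlib Require Import Reals List Arith.
From Stdlib Require Import Lra Lia ClassicalEpsilon FunctionalExtensionality PropExtensionality.
Import ListNotations.
Open Scope R_scope.

(** Partial derivatives along coordinate lines *)

Lemma upd_same (u : pt) (i : nat) : upd u i (u i) = u.
Proof.
  apply functional_extensionality; intro j; unfold upd.
  destruct (Nat.eqb_spec j i); subst; auto.
Qed.

Lemma upd_eq (u : pt) (i : nat) (t : R) : upd u i t i = t.
Proof. unfold upd; rewrite Nat.eqb_refl; auto. Qed.

Lemma upd_neq (u : pt) (i : nat) (t : R) (j : nat) : j <> i -> upd u i t j = u j.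
Proof. intro H; unfold upd; apply Nat.eqb_neq in H; rewrite H; auto. Qed.

Lemma pd_unique (i : nat) (f : fn) (u : pt) (l : R) :
  derivable_pt_lim (fun t => f (upd u i t)) (u i) l -> pd i f u = l.
Proof.
  intro H; unfold pd.
  assert (E : exists l, derivable_pt_lim (fun t => f (upd u i t)) (u i) l) by eauto.
  eapply uniqueness_limite; [apply (epsilon_spec (inhabits 0) _ E) | exact H].
Qed.

Lemma pd_correct (i : nat) (f : fn) (u : pt) :
  ex_pd i f u -> derivable_pt_lim (fun t => f (upd u i t)) (u i) (pd i f u).
Proof. intros [l H]; rewrite (pd_unique _ _ _ _ H); exact H. Qed.

Lemma derivable_pt_lim_local (f h : R -> R) (x l d : R) : d > 0 ->
  (forall t, Rabs (t - x) < d -> f t = h t) ->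
  derivable_pt_lim f x l -> derivable_pt_lim h x l.
Proof.
  intros Hd Hfh H eps Heps; destruct (H eps Heps) as [del Hdel].
  assert (Hm : 0 < Rmin del d) by (apply Rmin_pos; [apply cond_pos | lra]).
  exists (mkposreal _ Hm); intros dx Hdx0 Hdx; simpl in Hdx.
  rewrite <- !Hfh.
  - apply Hdel; auto; apply Rlt_le_trans with (1 := Hdx); apply Rmin_l.
  - unfold Rminus; rewrite Rplus_opp_r, Rabs_R0; lra.
  - replace (x + dx - x) with dx by ring.
    apply Rlt_le_trans with (1 := Hdx); apply Rmin_r.
Qed.

Lemma near_upd (n : nat) (u : pt) (i : nat) (t d : R) : (i < n)%nat ->
  Rabs (t - u i) < d -> d > 0 -> near n u d (upd u i t).
Proof.
  intros Hi Ht Hd; split.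
  - intros j Hj; destruct (Nat.eq_dec j i) as [->|Hji]; [rewrite upd_eq; auto|].
    rewrite upd_neq by auto; unfold Rminus; rewrite Rplus_opp_r, Rabs_R0; lra.
  - intros j Hj; apply upd_neq; lia.
Qed.

Lemma pd_local (n : nat) (D : pt -> Prop) (i : nat) (f h : fn) (u : pt) :
  open_dom n D -> D u -> (i < n)%nat ->
  (forall u', D u' -> f u' = h u') -> pd i f u = pd i h u.
Proof.
  intros HD Du Hi H; destruct (HD u Du) as [d [Hd Hnear]].
  unfold pd; f_equal; apply functional_extensionality; intro l.
  apply propositional_extensionality; split; apply derivable_pt_lim_local with d; auto;
    intros t Ht; [|symmetry]; apply H, Hnear, near_upd; auto.
Qed.

Lemma ex_pd_local (n : nat) (D : pt -> Prop) (f h : fn) (l : nat) (u : pt) :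
  open_dom n D -> D u -> (l < n)%nat ->
  (forall u', D u' -> f u' = h u') -> ex_pd l h u -> ex_pd l f u.
Proof.
  intros HD Du Hl H [L HL]; exists L; destruct (HD u Du) as [d [Hd Hnear]].
  apply derivable_pt_lim_local with (fun t => h (upd u l t)) d; auto.
  intros t Ht; symmetry; apply H, Hnear, near_upd; auto.
Qed.

Lemma pd_ext (i : nat) (f h : fn) (u : pt) : (forall u', f u' = h u') -> pd i f u = pd i h u.
Proof. intro H; replace f with h; auto; apply functional_extensionality; auto. Qed.

Lemma pd_const (i : nat) (c : R) (u : pt) : pd i (fun _ => c) u = 0.
Proof. apply pd_unique, derivable_pt_lim_const. Qed.

(* Differentiation rules, stated so that [eapply] can infer the derivative. *)
Lemma dl_plus (f h : R -> R) (x lf lh : R) : derivable_pt_lim f x lf ->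
  derivable_pt_lim h x lh -> derivable_pt_lim (fun t => f t + h t) x (lf + lh).
Proof. apply derivable_pt_lim_plus. Qed.

Lemma dl_minus (f h : R -> R) (x lf lh : R) : derivable_pt_lim f x lf ->
  derivable_pt_lim h x lh -> derivable_pt_lim (fun t => f t - h t) x (lf - lh).
Proof. apply derivable_pt_lim_minus. Qed.

Lemma dl_mult (f h : R -> R) (x lf lh : R) : derivable_pt_lim f x lf ->
  derivable_pt_lim h x lh -> derivable_pt_lim (fun t => f t * h t) x (lf * h x + f x * lh).
Proof. apply derivable_pt_lim_mult. Qed.

Lemma dl_opp (f : R -> R) (x lf : R) :
  derivable_pt_lim f x lf -> derivable_pt_lim (fun t => - f t) x (- lf).
Proof. apply derivable_pt_lim_opp. Qed.

Lemma dl_div (f h : R -> R) (x lf lh : R) : derivable_pt_lim f x lf ->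
  derivable_pt_lim h x lh -> h x <> 0 ->
  derivable_pt_lim (fun t => f t / h t) x ((lf * h x - lh * f x) / (h x)²).
Proof. apply derivable_pt_lim_div. Qed.

Lemma dl_inv (h : R -> R) (x lh : R) : derivable_pt_lim h x lh -> h x <> 0 ->
  derivable_pt_lim (fun t => / h t) x ((0 * h x - lh * 1) / (h x)²).
Proof.
  intros H1 H2; apply derivable_pt_lim_local with (fun t => 1 / h t) 1; [lra| |].
  - intros; unfold Rdiv; ring.
  - apply dl_div; auto; apply derivable_pt_lim_const.
Qed.

Lemma dl_pow2 (f : R -> R) (x lf : R) :
  derivable_pt_lim f x lf -> derivable_pt_lim (fun t => f t ^ 2) x (lf * f x + f x * lf).
Proof.
  intro H; apply derivable_pt_lim_local with (fun t => f t * f t) 1; [lra| intros; ring |].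
  apply dl_mult; auto.
Qed.

(* [derive] differentiates a rational expression in coordinate-line restrictions,
   leaving the existence of the partial derivatives and the nonvanishing of
   denominators as side goals. *)
Ltac derive := match goal with
  | |- derivable_pt_lim (fun t => @?a t + @?b t) _ _ => eapply dl_plus; [derive | derive]
  | |- derivable_pt_lim (fun t => @?a t - @?b t) _ _ => eapply dl_minus; [derive | derive]
  | |- derivable_pt_lim (fun t => @?a t / @?b t) _ _ => eapply dl_div; [derive | derive | idtac]
  | |- derivable_pt_lim (fun t => @?a t * @?b t) _ _ => eapply dl_mult; [derive | derive]
  | |- derivable_pt_lim (fun t => / @?b t) _ _ => eapply dl_inv; [derive | idtac]
  | |- derivable_pt_lim (fun t => - @?a t) _ _ => eapply dl_opp; [derive]
  | |- derivable_pt_lim (fun t => @?a t ^ 2) _ _ => eapply dl_pow2; [derive]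
  | |- derivable_pt_lim (fun t => ?X (upd _ _ t)) _ _ => eapply pd_correct
  | |- derivable_pt_lim (fun t => ?c) _ _ => apply derivable_pt_lim_const
  end.

(* [compute_pd] replaces every [pd l (fun x => ...) u] of the goal by its value. *)
Ltac compute_pd := repeat match goal with |- context [pd ?l (fun x => @?b x) ?u] =>
    erewrite (pd_unique l (fun x => b x) u);
      [| cbv beta; derive; auto; cbv beta; rewrite ?upd_same; auto] end;
  cbv beta; rewrite ?upd_same.

Lemma ex_pd_of_lim (i : nat) (f : fn) (u : pt) (l : R) :
  derivable_pt_lim (fun t => f (upd u i t)) (u i) l -> ex_pd i f u.
Proof. intro H; exists l; exact H. Qed.

Lemma smooth_ex_pd (n : nat) (D : pt -> Prop) (X : fn) (u : pt) (i : nat) :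
  smooth n D X -> D u -> (i < n)%nat -> ex_pd i X u.
Proof. intros H Du Hi; apply (proj2 (H [] (Forall_nil _) u Du)); auto. Qed.

Lemma smooth_ex_pd2 (n : nat) (D : pt -> Prop) (X : fn) (u : pt) (i j : nat) :
  smooth n D X -> D u -> (i < n)%nat -> (j < n)%nat -> ex_pd i (pd j X) u.
Proof. intros H Du Hi Hj; apply (proj2 (H [j] (Forall_cons (P := fun i => (i < n)%nat) j Hj (Forall_nil _)) u Du)); auto. Qed.

(** Symmetry of second partial derivatives *)

Definition upd2 (u : pt) (k l : nat) (s t : R) : pt := upd (upd u k s) l t.

Lemma upd2_swap (u : pt) (k l : nat) (s t : R) : k <> l -> upd2 u k l s t = upd2 u l k t s.
Proof.
  intro H; apply functional_extensionality; intro j; unfold upd2, upd.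
  destruct (Nat.eqb_spec j k); destruct (Nat.eqb_spec j l); subst; auto; lia.
Qed.

Lemma upd2_near (n : nat) (u : pt) (k l : nat) (s t d : R) :
  (k < n)%nat -> (l < n)%nat -> Rabs (s - u k) < d -> Rabs (t - u l) < d -> d > 0 ->
  near n u d (upd2 u k l s t).
Proof.
  intros Hk Hl Hs Ht Hd; split.
  - intros j Hj; unfold upd2, upd.
    destruct (Nat.eqb_spec j l); subst; auto.
    destruct (Nat.eqb_spec j k); subst; auto.
    unfold Rminus; rewrite Rplus_opp_r, Rabs_R0; lra.
  - intros j Hj; unfold upd2, upd.
    destruct (Nat.eqb_spec j l); [lia|]; destruct (Nat.eqb_spec j k); [lia|auto].
Qed.

Lemma upd2_deriv_snd (Y : fn) (u : pt) (k l : nat) (s t : R) :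
  ex_pd l Y (upd2 u k l s t) ->
  derivable_pt_lim (fun t' => Y (upd2 u k l s t')) t (pd l Y (upd2 u k l s t)).
Proof.
  intro e; pose proof (pd_correct _ _ _ e) as H; unfold upd2 in *; rewrite upd_eq in H.
  replace (fun t' => Y (upd (upd u k s) l t'))
    with (fun t' => Y (upd (upd (upd u k s) l t) l t')); auto.
  apply functional_extensionality; intro t'; f_equal.
  apply functional_extensionality; intro j; unfold upd; destruct (Nat.eqb_spec j l); auto.
Qed.

Lemma upd2_deriv_fst (Y : fn) (u : pt) (k l : nat) (s t : R) : k <> l ->
  ex_pd k Y (upd2 u k l s t) ->
  derivable_pt_lim (fun s' => Y (upd2 u k l s' t)) s (pd k Y (upd2 u k l s t)).
Proof.
  intros Hkl e; rewrite upd2_swap in * by auto.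
  replace (fun s' => Y (upd2 u k l s' t)) with (fun s' => Y (upd2 u l k t s'))
    by (apply functional_extensionality; intro; rewrite upd2_swap; auto).
  apply upd2_deriv_snd; auto.
Qed.

(* Two applications of the mean value theorem: the double difference of [X] over
   a square of side [h] is [h^2] times [pd l (pd k X)] at some point of the square. *)
Lemma double_difference_mvt (X : fn) (u : pt) (k l : nat) (a b h : R) :
  k <> l -> 0 < h ->
  (forall s t, a <= s <= a + h -> b <= t <= b + h ->
     ex_pd k X (upd2 u k l s t) /\ ex_pd l (pd k X) (upd2 u k l s t)) ->
  exists s t, a <= s <= a + h /\ b <= t <= b + h /\
    X (upd2 u k l (a + h) (b + h)) - X (upd2 u k l (a + h) b)
      - X (upd2 u k l a (b + h)) + X (upd2 u k l a b)
    = h * h * pd l (pd k X) (upd2 u k l s t).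
Proof.
  intros Hkl Hh EX.
  destruct (MVT_cor2 (fun s => X (upd2 u k l s (b + h)) - X (upd2 u k l s b))
    (fun s => pd k X (upd2 u k l s (b + h)) - pd k X (upd2 u k l s b)) a (a + h))
    as [s [Es Hs]]; [lra| |].
  { intros c Hc; apply dl_minus; apply upd2_deriv_fst; auto; apply EX; lra. }
  destruct (MVT_cor2 (fun t => pd k X (upd2 u k l s t))
    (fun t => pd l (pd k X) (upd2 u k l s t)) b (b + h)) as [t [Et Ht]]; [lra| |].
  { intros c Hc; apply upd2_deriv_snd; apply EX; lra. }
  exists s, t; split; [lra | split; [lra |]].
  cbv beta in Es, Et.
  replace (a + h - a) with h in Es by ring; replace (b + h - b) with h in Et by ring.
  rewrite Et in Es; rewrite Rmult_comm, <- Rmult_assoc, <- Es; ring.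
Qed.

Lemma schwarz (n : nat) (D : pt -> Prop) (X : fn) (u : pt) (k l : nat) :
  open_dom n D -> smooth n D X -> D u -> (k < n)%nat -> (l < n)%nat ->
  pd k (pd l X) u = pd l (pd k X) u.
Proof.
  intros HD HX Du Hk Hl; destruct (Nat.eq_dec k l) as [->|Hkl]; [reflexivity|].
  destruct (HD u Du) as [d0 [Hd0 HnearD]].
  set (c1 := pd l (pd k X) u); set (c2 := pd k (pd l X) u).
  destruct (Req_dec c2 c1) as [E|NE]; [exact E | exfalso].
  set (eps := Rabs (c1 - c2) / 2).
  assert (Heps : eps > 0) by (apply Rdiv_lt_0_compat; [apply Rabs_pos_lt; lra | lra]).
  assert (F2 : forall a b, (a < n)%nat -> (b < n)%nat -> Forall (fun i => (i < n)%nat) [a; b])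
    by (intros; repeat constructor; auto).
  destruct (proj1 (HX [l; k] (F2 l k Hl Hk) u Du) eps Heps) as [d1 [Hd1 C1]].
  destruct (proj1 (HX [k; l] (F2 k l Hk Hl) u Du) eps Heps) as [d2 [Hd2 C2]].
  set (h := Rmin d0 (Rmin d1 d2) / 2).
  assert (Hh : 0 < h /\ h < d0 /\ h < d1 /\ h < d2).
  { assert (0 < Rmin d0 (Rmin d1 d2)) by (repeat apply Rmin_pos; lra).
    pose proof (Rmin_l d0 (Rmin d1 d2)); pose proof (Rmin_r d0 (Rmin d1 d2)).
    pose proof (Rmin_l d1 d2); pose proof (Rmin_r d1 d2); unfold h; lra. }
  assert (Hsq : forall s t d, u k <= s <= u k + h -> u l <= t <= u l + h -> h < d ->
             near n u d (upd2 u k l s t)).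
  { intros s t d Hs Ht Hd; apply upd2_near; auto; try lra;
      rewrite Rabs_right; lra. }
  assert (HsqD : forall s t, u k <= s <= u k + h -> u l <= t <= u l + h -> D (upd2 u k l s t))
    by (intros; apply HnearD, Hsq; tauto).
  destruct (double_difference_mvt X u k l (u k) (u l) h) as [s1 [t1 [Hs1 [Ht1 E1]]]];
    [exact Hkl | apply Hh | |].
  { intros s t Hs Ht; split;
      [apply (smooth_ex_pd n D) | apply (smooth_ex_pd2 n D)]; auto. }
  destruct (double_difference_mvt X u l k (u l) (u k) h) as [t2 [s2 [Ht2 [Hs2 E2]]]];
    [intros ->; apply Hkl; reflexivity | apply Hh | |].
  { intros t s Ht Hs; rewrite <- upd2_swap by auto; split;
      [apply (smooth_ex_pd n D) | apply (smooth_ex_pd2 n D)]; auto. }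
  rewrite <- !(upd2_swap u k l) in E2 by auto.
  assert (Eq : pd l (pd k X) (upd2 u k l s1 t1) = pd k (pd l X) (upd2 u k l s2 t2)).
  { apply Rmult_eq_reg_l with (h * h); [lra | apply Rgt_not_eq; nra]. }
  specialize (C1 _ (Hsq s1 t1 d1 Hs1 Ht1 (proj1 (proj2 (proj2 Hh)))) (HsqD s1 t1 Hs1 Ht1)).
  specialize (C2 _ (Hsq s2 t2 d2 Hs2 Ht2 (proj2 (proj2 (proj2 Hh)))) (HsqD s2 t2 Hs2 Ht2)).
  simpl in C1, C2; fold c1 in C1; fold c2 in C2; rewrite Eq in C1.
  assert (Rabs (c1 - c2) < 2 * eps).
  { replace (c1 - c2) with (- (pd k (pd l X) (upd2 u k l s2 t2) - c1)
                          + (pd k (pd l X) (upd2 u k l s2 t2) - c2)) by ring.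
    eapply Rle_lt_trans; [apply Rabs_triang | rewrite Rabs_Ropp; lra]. }
  unfold eps in *; lra.
Qed.

(** Finite sums *)

Lemma sumR_S (n : nat) (f : nat -> R) : sumR (S n) f = sumR n f + f n.
Proof.
  unfold sumR; rewrite seq_S, fold_right_app; simpl.
  generalize (f n); induction (seq 0 n) as [|m s IH]; intros; simpl; [ring | rewrite IH; ring].
Qed.

Lemma sumR_ext (n : nat) (f h : nat -> R) :
  (forall m, (m < n)%nat -> f m = h m) -> sumR n f = sumR n h.
Proof. induction n; intro H; [reflexivity | rewrite !sumR_S, IHn, H; auto]. Qed.

Lemma sumR_plus (n : nat) (f h : nat -> R) :
  sumR n (fun m => f m + h m) = sumR n f + sumR n h.
Proof. induction n; [unfold sumR; simpl; ring | rewrite !sumR_S, IHn; ring]. Qed.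

Lemma sumR_scal (n : nat) (c : R) (f : nat -> R) : sumR n (fun m => c * f m) = c * sumR n f.
Proof. induction n; [unfold sumR; simpl; ring | rewrite !sumR_S, IHn; ring]. Qed.

Lemma sumR_zero (n : nat) (f : nat -> R) : (forall m, (m < n)%nat -> f m = 0) -> sumR n f = 0.
Proof. induction n; intro H; [reflexivity | rewrite sumR_S, IHn, H; auto; ring]. Qed.

Lemma sumR_extract (n a : nat) (f : nat -> R) : (a < n)%nat ->
  sumR n f = f a + sumR n (fun m => if Nat.eqb m a then 0 else f m).
Proof.
  intro Ha.
  rewrite (sumR_ext n f (fun m => (if Nat.eqb m a then f a else 0)
                                  + (if Nat.eqb m a then 0 else f m)))
    by (intros m _; destruct (Nat.eqb_spec m a); subst; ring).
  rewrite sumR_plus; f_equal.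
  induction n; [lia|]; rewrite sumR_S.
  destruct (Nat.eqb_spec n a) as [->|Hna].
  - rewrite sumR_zero; [ring|]; intros m Hm; destruct (Nat.eqb_spec m a); [lia|auto].
  - rewrite IHn by lia; ring.
Qed.

Definition rest2 (i k : nat) (f : nat -> R) : nat -> R :=
  fun m => if orb (Nat.eqb m i) (Nat.eqb m k) then 0 else f m.

Lemma sumR_split2 (n i k : nat) (f : nat -> R) : (i < n)%nat -> (k < n)%nat -> i <> k ->
  sumR n f = f i + f k + sumR n (rest2 i k f).
Proof.
  intros Hi Hk Hik; rewrite (sumR_extract n i) by auto; rewrite (sumR_extract n k) by auto.
  apply Nat.eqb_neq in Hik as Hki; rewrite Nat.eqb_sym in Hki; rewrite Hki, Rplus_assoc.
  f_equal; f_equal; apply sumR_ext; intros m _; unfold rest2.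
  destruct (Nat.eqb m k), (Nat.eqb m i); reflexivity.
Qed.

Lemma sumR_pick3 (n a b c : nat) (f : nat -> R) :
  (a < n)%nat -> (b < n)%nat -> (c < n)%nat -> a <> b -> a <> c -> b <> c ->
  (forall m, (m < n)%nat -> m <> a -> m <> b -> m <> c -> f m = 0) ->
  sumR n f = f a + f b + f c.
Proof.
  intros Ha Hb Hc Hab Hac Hbc H.
  rewrite (sumR_split2 n a b) by auto; rewrite (sumR_extract n c) by auto.
  unfold rest2; rewrite sumR_zero.
  - apply Nat.eqb_neq in Hac; apply Nat.eqb_neq in Hbc.
    rewrite Nat.eqb_sym, Hac, Nat.eqb_sym, Hbc; simpl; ring.
  - intros m Hm; destruct (Nat.eqb_spec m c); [reflexivity|].
    destruct (Nat.eqb_spec m a); destruct (Nat.eqb_spec m b); simpl; auto.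
Qed.

Definition lincomb (fs : list (R * (nat -> R))) (m : nat) : R :=
  fold_right (fun p acc => fst p * snd p m + acc) 0 fs.

Lemma sumR_lincomb (n : nat) (fs : list (R * (nat -> R))) :
  sumR n (lincomb fs) = fold_right (fun p acc => fst p * sumR n (snd p) + acc) 0 fs.
Proof.
  induction fs as [|[c f] fs IH]; simpl; [apply sumR_zero; auto|].
  unfold lincomb; simpl; rewrite (sumR_plus n (fun m => c * f m)), sumR_scal.
  fold (lincomb fs); rewrite IH; reflexivity.
Qed.

Lemma rest2_comm (i k : nat) (f : nat -> R) : rest2 i k f = rest2 k i f.
Proof. unfold rest2; apply functional_extensionality; intro m; rewrite Bool.orb_comm; reflexivity. Qed.

Lemma rest_sum_expand (n i k : nat) (a b c d : R) (x y p q h : nat -> R) :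
  sumR n (rest2 i k (fun m => (a * x m - c * p m - q m) * (b * y m - d * p m - q m) / h m)) =
  a * b * sumR n (rest2 i k (fun m => x m * y m / h m))
  + - a * d * sumR n (rest2 i k (fun m => x m * p m / h m))
  + - a * sumR n (rest2 i k (fun m => x m * q m / h m))
  + - b * c * sumR n (rest2 i k (fun m => y m * p m / h m))
  + - b * sumR n (rest2 i k (fun m => y m * q m / h m))
  + c * d * sumR n (rest2 i k (fun m => / h m * p m ^ 2))
  + (c + d) * sumR n (rest2 i k (fun m => / h m * p m * q m))
  + sumR n (rest2 i k (fun m => / h m * q m ^ 2)).
Proof.
  rewrite (sumR_ext n _ (lincomb
    [(a * b, rest2 i k (fun m => x m * y m / h m));
     (- a * d, rest2 i k (fun m => x m * p m / h m));
     (- a, rest2 i k (fun m => x m * q m / h m));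
     (- b * c, rest2 i k (fun m => y m * p m / h m));
     (- b, rest2 i k (fun m => y m * q m / h m));
     (c * d, rest2 i k (fun m => / h m * p m ^ 2));
     (c + d, rest2 i k (fun m => / h m * p m * q m));
     (1, rest2 i k (fun m => / h m * q m ^ 2))])).
  - rewrite sumR_lincomb; cbn [fold_right fst snd]; ring.
  - intros m _; unfold lincomb, rest2; cbn [fold_right fst snd].
    destruct (Nat.eqb m i), (Nat.eqb m k); simpl; unfold Rdiv; ring.
Qed.

(** Curvature of a diagonal metric *)

Lemma pd_g_dlnH (G : nat -> fn) (j i : nat) (u : pt) :
  G i u <> 0 -> pd j (G i) u = 2 * G i u * dlnH G j i u.
Proof. intro H; unfold dlnH; field; auto. Qed.

Ltac eqb_cases := repeat (rewrite Nat.eqb_refl || match goal with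
  |- context [Nat.eqb ?a ?b] =>
    let H := fresh in destruct (Nat.eqb_spec a b) as [H|H]; [subst; try lia|] end).

Lemma Gamma_dlnH (G : nat -> fn) (m j k : nat) (u : pt) : G m u <> 0 -> G j u <> 0 ->
  Gamma G m j k u =
    (if Nat.eqb m k then dlnH G j m u else 0) + (if Nat.eqb m j then dlnH G k m u else 0)
    - (if Nat.eqb j k then G j u / G m u * dlnH G m j u else 0).
Proof.
  intros H1 H2; unfold Gamma, dlnH.
  destruct (Nat.eqb_spec m k); destruct (Nat.eqb_spec m j); destruct (Nat.eqb_spec j k);
    subst; field; auto.
Qed.

Lemma Gamma_distinct (G : nat -> fn) (a b c : nat) (u : pt) :
  a <> b -> a <> c -> b <> c -> Gamma G a b c u = 0.
Proof. intros; unfold Gamma; eqb_cases; ring. Qed.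

Lemma Gamma_iij (G : nat -> fn) (i j : nat) : Gamma G i i j = dlnH G j i.
Proof. apply functional_extensionality; intro u; unfold Gamma, dlnH; eqb_cases; unfold Rdiv; ring. Qed.

Lemma Gamma_iji (G : nat -> fn) (i j : nat) : Gamma G i j i = dlnH G j i.
Proof. apply functional_extensionality; intro u; unfold Gamma, dlnH; eqb_cases; unfold Rdiv; ring. Qed.

Lemma Gamma_ikk (G : nat -> fn) (i k : nat) : i <> k ->
  Gamma G i k k = fun u => - / (2 * G i u) * pd i (G k) u.
Proof. intro H; apply functional_extensionality; intro u; unfold Gamma; eqb_cases; ring. Qed.

Lemma Riem_antisym (n : nat) (G : nat -> fn) (i j k l : nat) (u : pt) :
  Riem n G i j k l u = - Riem n G i j l k u.
Proof.
  unfold Riem.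
  rewrite (sumR_ext n (fun m => Gamma G i l m u * Gamma G m k j u - Gamma G i k m u * Gamma G m l j u)
     (fun m => (-1) * (Gamma G i k m u * Gamma G m l j u - Gamma G i l m u * Gamma G m k j u)))
    by (intros; ring).
  rewrite sumR_scal; ring.
Qed.

Lemma Riem_kk (n : nat) (G : nat -> fn) (i j k : nat) (u : pt) : Riem n G i j k k u = 0.
Proof. pose proof (Riem_antisym n G i j k k u); lra. Qed.

Lemma Riem_ijil (n : nat) (G : nat -> fn) (i j l : nat) (u : pt) :
  (i < n)%nat -> (j < n)%nat -> (l < n)%nat -> i <> j -> i <> l -> j <> l ->
  (forall m, (m < n)%nat -> G m u <> 0) ->
  Riem n G i j i l u = - pd l (dlnH G j i) u - dlnH G l i u * dlnH G j i u
     + dlnH G j i u * dlnH G l j u + dlnH G l i u * dlnH G j l u.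
Proof.
  intros Hi Hj Hl Hij Hil Hjl HG; unfold Riem.
  rewrite (pd_ext i (Gamma G i l j) (fun _ => 0)) by (intro; apply Gamma_distinct; auto).
  rewrite pd_const, Gamma_iij.
  rewrite (sumR_pick3 n i j l)
    by (auto; intros m Hm H1 H2 H3; rewrite !Gamma_dlnH by auto; eqb_cases; ring).
  rewrite !Gamma_dlnH by auto; eqb_cases; field; auto.
Qed.

Lemma Riem_ijjl (n : nat) (G : nat -> fn) (i j l : nat) (u : pt) :
  (i < n)%nat -> (j < n)%nat -> (l < n)%nat -> i <> j -> i <> l -> j <> l ->
  (forall m, (m < n)%nat -> G m u <> 0) ->
  ex_pd l (G i) u -> ex_pd l (G j) u -> ex_pd l (pd i (G j)) u ->
  Riem n G i j j l u = - (G j u / G i u) * Riem n G j i j l u.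
Proof.
  intros Hi Hj Hl Hij Hil Hjl HG e1 e2 e3.
  rewrite (Riem_ijil n G j i l) by auto; unfold Riem.
  rewrite (pd_ext j (Gamma G i l j) (fun _ => 0)) by (intro; apply Gamma_distinct; auto).
  rewrite pd_const, Gamma_ikk by auto.
  rewrite (sumR_pick3 n i j l)
    by (auto; intros m Hm H1 H2 H3; rewrite !Gamma_dlnH by auto; eqb_cases; ring).
  rewrite !Gamma_dlnH by auto; eqb_cases.
  unfold dlnH; compute_pd; unfold Rsqr; field; split; auto.
Qed.

Lemma Riem_disjoint (n : nat) (G : nat -> fn) (i j k l : nat) (u : pt) :
  i <> j -> k <> l -> k <> i -> k <> j -> l <> i -> l <> j -> Riem n G i j k l u = 0.
Proof.
  intros; unfold Riem.
  rewrite (pd_ext k (Gamma G i l j) (fun _ => 0)) by (intro; apply Gamma_distinct; auto).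
  rewrite (pd_ext l (Gamma G i k j) (fun _ => 0)) by (intro; apply Gamma_distinct; auto).
  rewrite !pd_const, sumR_zero; [ring|]; intros m Hm.
  destruct (Nat.eq_dec m i) as [->|]; [rewrite (Gamma_distinct G i l j), (Gamma_distinct G i k j) by auto; ring|].
  destruct (Nat.eq_dec m k) as [->|]; [rewrite (Gamma_distinct G k l j), (Gamma_distinct G i l k) by auto; ring|].
  destruct (Nat.eq_dec m l) as [->|]; [rewrite (Gamma_distinct G l k j), (Gamma_distinct G i k l) by auto; ring|].
  rewrite (Gamma_distinct G i k m), (Gamma_distinct G i l m) by auto; ring.
Qed.

Lemma Riem_iikl (n : nat) (G : nat -> fn) (i k l : nat) (u : pt) :
  (forall m, (m < n)%nat -> G m u <> 0) -> (i < n)%nat -> (k < n)%nat -> (l < n)%nat ->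
  ex_pd k (G i) u -> ex_pd l (G i) u -> ex_pd k (pd l (G i)) u -> ex_pd l (pd k (G i)) u ->
  pd k (pd l (G i)) u = pd l (pd k (G i)) u ->
  Riem n G i i k l u = 0.
Proof.
  intros HG Hi Hk Hl e1 e2 e3 e4 Hs; unfold Riem; rewrite !Gamma_iji.
  rewrite sumR_zero by (intros m Hm; rewrite !Gamma_dlnH by auto; eqb_cases; field; auto).
  unfold dlnH; compute_pd; rewrite Hs; unfold Rsqr; field; auto.
Qed.

Definition diag_term (G : nat -> fn) (i k : nat) (u : pt) : R :=
  pd i (dlnH G i k) u + dlnH G i k u ^ 2 - dlnH G i i u * dlnH G i k u.

Lemma Rik_diag (n : nat) (G : nat -> fn) (i k : nat) (u : pt) :
  (i < n)%nat -> (k < n)%nat -> i <> k -> (forall m, (m < n)%nat -> G m u <> 0) ->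
  ex_pd i (G i) u -> ex_pd i (G k) u -> ex_pd i (pd i (G k)) u ->
  ex_pd k (G k) u -> ex_pd k (G i) u -> ex_pd k (pd k (G i)) u ->
  Rik n G i k u = - diag_term G i k u / G i u - diag_term G k i u / G k u
    - sumR n (rest2 i k (fun m => dlnH G m i u * dlnH G m k u / G m u)).
Proof.
  intros Hi Hk Hik HG e1 e2 e3 e4 e5 e6.
  unfold Rik, Riem, diag_term; rewrite Gamma_iij, Gamma_ikk by auto.
  rewrite (sumR_split2 n i k) by auto.
  rewrite (sumR_ext n (rest2 i k _)
    (fun m => - G k u * rest2 i k (fun m => dlnH G m i u * dlnH G m k u / G m u) m)).
  2:{ intros m Hm; unfold rest2.
      destruct (Nat.eqb_spec m i); destruct (Nat.eqb_spec m k); simpl; try ring.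
      rewrite !Gamma_dlnH by auto; eqb_cases; field; auto. }
  rewrite sumR_scal, !Gamma_dlnH by auto; eqb_cases.
  unfold dlnH; compute_pd.
  rewrite (pd_g_dlnH G i i u), (pd_g_dlnH G i k u), (pd_g_dlnH G k k u), (pd_g_dlnH G k i u) by auto.
  unfold dlnH, Rsqr; field; auto.
Qed.

Lemma lap_i_split (n : nat) (G : nat -> fn) (i k : nat) (X : fn) (u : pt) :
  (i < n)%nat -> (k < n)%nat -> i <> k -> (forall m, (m < n)%nat -> G m u <> 0) ->
  lap_i n G i X u = (pd i (pd i X) u - dlnH G i i u * pd i X u) / G i u
    + dlnH G k i u * pd k X u / G k u
    + sumR n (rest2 i k (fun m => dlnH G m i u * pd m X u / G m u)).
Proof.
  intros Hi Hk Hik HG; unfold lap_i; rewrite (sumR_split2 n i k) by auto.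
  rewrite (sumR_ext n (rest2 i k _)
    (fun m => - G i u * rest2 i k (fun m => dlnH G m i u * pd m X u / G m u) m)).
  2:{ intros m Hm; unfold rest2.
      destruct (Nat.eqb_spec m i); destruct (Nat.eqb_spec m k); simpl; try ring.
      rewrite Gamma_dlnH by auto; eqb_cases; field; auto. }
  rewrite sumR_scal, !Gamma_dlnH by auto; eqb_cases; field; auto.
Qed.

(** Metrics of the system and the reciprocal metric *)

Section Reciprocal.

Variables (n : nat) (D : pt -> Prop) (v g : nat -> fn) (B A N M : fn).
Hypothesis HD : open_dom n D.
Hypothesis Hsm_v : forall i, (i < n)%nat -> smooth n D (v i).
Hypothesis Hsm_g : forall i, (i < n)%nat -> smooth n D (g i).
Hypotheses (Hsm_B : smooth n D B) (Hsm_A : smooth n D A).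
Hypotheses (Hsm_N : smooth n D N) (Hsm_M : smooth n D M).
Hypothesis Hhyp : strictly_hyperbolic n D v.
Hypothesis Hg : metric_of_system n D v g.
Hypothesis HBA : conservation_law n D v B A.
Hypothesis HNM : conservation_law n D v N M.
Hypothesis Hdet : forall u, D u -> B u * M u - A u * N u <> 0.
Hypothesis Hden : forall i u, (i < n)%nat -> D u -> M u - N u * v i u <> 0.

Let gh := ghat v g B A N M.

Ltac ex_smooth := first [ solve [apply (smooth_ex_pd2 n D); auto]
                        | solve [apply (smooth_ex_pd n D); auto] ].

Lemma g_nonzero (m : nat) (u : pt) : (m < n)%nat -> D u -> g m u <> 0.
Proof. intros; apply (proj1 Hg); auto. Qed.

Lemma v_sep (a b : nat) (u : pt) : (a < n)%nat -> (b < n)%nat -> a <> b -> D u ->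
  v a u - v b u <> 0.
Proof. intros Ha Hb Hab Du E; apply (Hhyp a b u); auto; lra. Qed.

Lemma pd_v_lame (j i : nat) (u : pt) : (i < n)%nat -> (j < n)%nat -> i <> j -> D u ->
  pd j (v i) u = (v j u - v i u) * dlnH g j i u.
Proof.
  intros Hi Hj Hij Du; rewrite (proj2 Hg i j u) by auto.
  field; apply v_sep; auto.
Qed.

Lemma ex_pd_dlnH (j i l : nat) (u : pt) : D u -> (i < n)%nat -> (j < n)%nat -> (l < n)%nat ->
  ex_pd l (dlnH g j i) u.
Proof.
  intros Du Hi Hj Hl; unfold dlnH; eapply ex_pd_of_lim; cbv beta; derive; try ex_smooth.
  rewrite upd_same; apply Rmult_integral_contrapositive_currified; [lra | apply g_nonzero; auto].
Qed.

(* Tsarev: the second derivatives of a conserved density are governed by the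
   Lamé coefficients (compare the two mixed partials of the flux). *)
Lemma conserved_mixed (X Y : fn) (j l : nat) (u : pt) :
  smooth n D X -> smooth n D Y -> conservation_law n D v X Y ->
  (j < n)%nat -> (l < n)%nat -> j <> l -> D u ->
  pd l (pd j X) u = dlnH g j l u * pd l X u + dlnH g l j u * pd j X u.
Proof.
  intros HX HY HXY Hj Hl Hjl Du.
  pose proof (schwarz n D Y u l j HD HY Du Hl Hj) as SY.
  pose proof (schwarz n D X u l j HD HX Du Hl Hj) as SX.
  rewrite (pd_local n D l (pd j Y) (fun u' => v j u' * pd j X u')) in SY
    by (auto; intros; apply HXY; auto).
  rewrite (pd_local n D j (pd l Y) (fun u' => v l u' * pd l X u')) in SY
    by (auto; intros; apply HXY; auto).
  revert SY; compute_pd; try ex_smooth; intro SY.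
  rewrite (pd_v_lame l j u), (pd_v_lame j l u), <- SX in SY by auto.
  apply Rmult_eq_reg_l with (v j u - v l u); [lra | apply v_sep; auto].
Qed.

(* Compatibility equations: the rotation coefficients of [g] coincide with
   those of the flat metric of the DN system, hence satisfy its
   Darboux equations (vanishing of R^a_{bac}). *)
Lemma dlnH_darboux (a b c : nat) (u : pt) : DN_system n D v -> D u ->
  (a < n)%nat -> (b < n)%nat -> (c < n)%nat -> a <> b -> a <> c -> b <> c ->
  pd c (dlnH g b a) u = - dlnH g c a u * dlnH g b a u
    + dlnH g b a u * dlnH g c b u + dlnH g c a u * dlnH g b c u.
Proof.
  intros [g0 [_ [Hg0 Hflat]]] Du Ha Hb Hc Hab Hac Hbc.
  assert (Heq : forall a b u', (a < n)%nat -> (b < n)%nat -> a <> b -> D u' ->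
            dlnH g0 b a u' = dlnH g b a u')
    by (intros a' b' u' Ha' Hb' Hab' Du'; rewrite (proj2 Hg0), (proj2 Hg); auto).
  pose proof (Riem_ijil n g0 a b c u Ha Hb Hc Hab Hac Hbc
                (fun m Hm => proj1 Hg0 m u Hm Du)) as Hr.
  rewrite (Hflat a b a c u) in Hr by auto.
  rewrite (pd_local n D c (dlnH g0 b a) (dlnH g b a)) in Hr
    by (auto; intros; apply Heq; auto).
  rewrite !Heq in Hr by auto; lra.
Qed.

Lemma ghat_nonzero (m : nat) (u : pt) : (m < n)%nat -> D u -> gh m u <> 0.
Proof.
  intros Hm Du; unfold gh, ghat.
  apply Rmult_integral_contrapositive_currified; [apply pow_nonzero|apply g_nonzero; auto].
  unfold Rdiv; apply Rmult_integral_contrapositive_currified;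
    [apply Hden | apply Rinv_neq_0_compat, Hdet]; auto.
Qed.

(* The logarithmic derivative of the conformal factor (M - N v^i)/(BM - AN)
   relating [gh] to [g], computed with the conservation laws. *)
Definition recip_shift (j i : nat) : fn := fun u =>
  ((v j u - v i u) * pd j N u - N u * pd j (v i) u) / (M u - N u * v i u)
  - (pd j B u * (M u - N u * v j u) + pd j N u * (B u * v j u - A u))
    / (B u * M u - A u * N u).

Lemma dlnH_ghat (j i : nat) (u : pt) : (i < n)%nat -> (j < n)%nat -> D u ->
  dlnH gh j i u = dlnH g j i u + recip_shift j i u.
Proof.
  intros Hi Hj Du; unfold gh, dlnH at 1, ghat; compute_pd; try ex_smooth.
  rewrite (HNM j u), (HBA j u) by auto; unfold recip_shift, dlnH, Rsqr.
  field; repeat split; auto; apply g_nonzero; auto.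
Qed.

(* Off the diagonal, [pd j (v i)] is eliminated by the Lamé condition. *)
Definition recip_shift_off (j i : nat) : fn := fun u =>
  (v j u - v i u) * (pd j N u - N u * dlnH g j i u) / (M u - N u * v i u)
  - (pd j B u * (M u - N u * v j u) + pd j N u * (B u * v j u - A u))
    / (B u * M u - A u * N u).

Lemma dlnH_ghat_off (j i : nat) (u : pt) : (i < n)%nat -> (j < n)%nat -> i <> j -> D u ->
  dlnH gh j i u = dlnH g j i u + recip_shift_off j i u.
Proof.
  intros Hi Hj Hij Du; rewrite dlnH_ghat by auto.
  unfold recip_shift, recip_shift_off; rewrite pd_v_lame by auto; field; auto.
Qed.

Definition pd_ghat_formula (i j : nat) : fn := fun u =>
  2 * ((M u - N u * v j u) / (B u * M u - A u * N u)) *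
  (((pd i M u - (pd i N u * v j u + N u * pd i (v j) u)) * (B u * M u - A u * N u)
    - (M u - N u * v j u) * (pd i B u * M u + B u * pd i M u - (pd i A u * N u + A u * pd i N u)))
    / ((B u * M u - A u * N u) * (B u * M u - A u * N u))) * g j u
  + ((M u - N u * v j u) / (B u * M u - A u * N u)) ^ 2 * pd i (g j) u.

Lemma pd_ghat (i j : nat) (u : pt) : (i < n)%nat -> (j < n)%nat -> D u ->
  pd i (gh j) u = pd_ghat_formula i j u.
Proof.
  intros Hi Hj Du; unfold gh, ghat, pd_ghat_formula; compute_pd; try ex_smooth.
  unfold Rsqr; field; auto.
Qed.

Lemma ex_pd_ghat (i j : nat) (u : pt) : (i < n)%nat -> (j < n)%nat -> D u ->
  ex_pd i (gh j) u.
Proof.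
  intros Hi Hj Du; unfold gh, ghat; eapply ex_pd_of_lim; cbv beta; derive; try ex_smooth.
  rewrite upd_same; auto.
Qed.

Lemma ex_pd2_ghat (i j k : nat) (u : pt) : (i < n)%nat -> (j < n)%nat -> (k < n)%nat -> D u ->
  ex_pd k (pd i (gh j)) u.
Proof.
  intros Hi Hj Hk Du; apply ex_pd_local with n D (pd_ghat_formula i j); auto.
  - intros; apply pd_ghat; auto.
  - unfold pd_ghat_formula; eapply ex_pd_of_lim; cbv beta; derive; try ex_smooth;
      rewrite upd_same; auto; apply Rmult_integral_contrapositive_currified; auto.
Qed.

Lemma ghat_mixed (j k l : nat) (u : pt) : (j < n)%nat -> (k < n)%nat -> (l < n)%nat -> D u ->
  pd k (pd l (gh j)) u = pd l (pd k (gh j)) u.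
Proof.
  intros Hj Hk Hl Du.
  rewrite (pd_local n D k _ (pd_ghat_formula l j)) by (auto; intros; apply pd_ghat; auto).
  rewrite (pd_local n D l _ (pd_ghat_formula k j)) by (auto; intros; apply pd_ghat; auto).
  unfold pd_ghat_formula; compute_pd; try ex_smooth;
    try (apply Rmult_integral_contrapositive_currified; auto).
  rewrite !(schwarz n D _ u k l HD) by auto.
  unfold Rsqr; field; auto.
Qed.

(** The components of the reciprocal curvature that vanish *)

(* R^i_{jil} of the reciprocal metric, i, j, l distinct: the Darboux equations
   of [g] and the Tsarev identities make it vanish. *)
Lemma recip_Riem_ijil (i j l : nat) (u : pt) : DN_system n D v ->
  (i < n)%nat -> (j < n)%nat -> (l < n)%nat -> i <> j -> i <> l -> j <> l -> D u ->
  Riem n gh i j i l u = 0.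
Proof.
  intros HDN Hi Hj Hl Hij Hil Hjl Du.
  rewrite (Riem_ijil n gh i j l u) by (auto; intros; apply ghat_nonzero; auto).
  rewrite !dlnH_ghat_off by auto.
  rewrite (pd_local n D l _ (fun u' => dlnH g j i u' + recip_shift_off j i u'))
    by (auto; intros; apply dlnH_ghat_off; auto).
  unfold recip_shift_off; compute_pd;
    try ex_smooth; try (apply ex_pd_dlnH; auto); try (apply Hdet; auto).
  rewrite (HNM l u), (HBA l u), (pd_v_lame l j u), (pd_v_lame l i u) by auto.
  rewrite (dlnH_darboux i j l u HDN) by auto.
  rewrite (conserved_mixed N M j l u), (conserved_mixed B A j l u) by auto.
  unfold Rsqr; field; repeat split; auto; apply v_sep; auto.
Qed.

Lemma recip_Riem_zero (i j k l : nat) (u : pt) : DN_system n D v ->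
  (i < n)%nat -> (j < n)%nat -> (k < n)%nat -> (l < n)%nat -> D u ->
  (i = j \/ ~ ((k = i /\ l = j) \/ (k = j /\ l = i))) ->
  Riem n gh i j k l u = 0.
Proof.
  intros HDN Hi Hj Hk Hl Du Hc.
  assert (HG : forall m, (m < n)%nat -> gh m u <> 0) by (intros; apply ghat_nonzero; auto).
  assert (Hjjl : forall a b c, (a < n)%nat -> (b < n)%nat -> (c < n)%nat ->
             a <> b -> a <> c -> b <> c -> Riem n gh a b b c u = 0).
  { intros a b c Ha Hb Hc' Hab Hac Hbc.
    rewrite (Riem_ijjl n gh a b c u), recip_Riem_ijil by
      (auto; try apply ex_pd_ghat; try apply ex_pd2_ghat; auto).
    ring. }
  destruct (Nat.eq_dec i j) as [<-|Hij].
  { apply Riem_iikl; auto; try apply ex_pd_ghat; try apply ex_pd2_ghat; auto.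
    apply ghat_mixed; auto. }
  destruct Hc as [|Hc]; [contradiction|].
  destruct (Nat.eq_dec k l) as [<-|Hkl]; [apply Riem_kk|].
  destruct (Nat.eq_dec k i) as [->|Hki].
  { apply recip_Riem_ijil; auto; intros ->; tauto. }
  destruct (Nat.eq_dec k j) as [->|Hkj].
  { apply Hjjl; auto; intros ->; tauto. }
  destruct (Nat.eq_dec l i) as [->|Hli].
  { rewrite Riem_antisym, recip_Riem_ijil; auto; ring. }
  destruct (Nat.eq_dec l j) as [->|Hlj].
  { rewrite Riem_antisym, Hjjl; auto; ring. }
  apply Riem_disjoint; auto.
Qed.

(** The sectional curvatures of the reciprocal metric *)

(* Transformation of the rotation coefficients: for m different from i,
   H^_m^{-1} d_m H^_i = (H_i/H^_i) H_m^{-1} d_m H_i - v^_i d_m N - d_m B, so the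
   off-diagonal part of the formula [Rik_diag] transforms as follows. *)
Lemma recip_rest_sum (i k : nat) (u : pt) : (i < n)%nat -> (k < n)%nat -> i <> k -> D u ->
  sumR n (rest2 i k (fun m => dlnH gh m i u * dlnH gh m k u / gh m u)) =
  sumR n (rest2 i k (fun m =>
    (Hratio v B A N M i u * dlnH g m i u - vhat v B A N M i u * pd m N u - pd m B u)
    * (Hratio v B A N M k u * dlnH g m k u - vhat v B A N M k u * pd m N u - pd m B u)
    / g m u)).
Proof.
  intros Hi Hk Hik Du; apply sumR_ext; intros m Hm; unfold rest2.
  destruct (Nat.eqb_spec m i); destruct (Nat.eqb_spec m k); simpl; try reflexivity.
  rewrite !dlnH_ghat_off by auto.
  unfold recip_shift_off, gh, ghat, Hratio, vhat.
  field; repeat split; auto; apply g_nonzero; auto.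
Qed.

Section Sectional.

Variables (w1 w2 : nat -> fn) (T1 T2 Z1 Z2 P S : fn).
Hypothesis Hcurv : forall i k u, (i < n)%nat -> (k < n)%nat -> i <> k -> D u ->
  Rik n g i k u = w1 i u + w1 k u + w2 i u * v k u + w2 k u * v i u.
Hypothesis HPS : forall u, D u ->
  P u + S u = gradprod n g N B u + T1 u * N u + T2 u * M u + Z1 u * B u + Z2 u * A u.

Lemma recip_Rik (i k : nat) (u : pt) : (i < n)%nat -> (k < n)%nat -> i <> k -> D u ->
  let nv := fun i u => lap_i n g i N u + w1 i u * N u + Z1 u
                       + w2 i u * M u + v i u * Z2 u in
  let bv := fun i u => lap_i n g i B u + w1 i u * B u + T1 u
                       + w2 i u * A u + v i u * T2 u in
  let Q := fun u => / 2 * gradsq n g B u + B u * T1 u + A u * T2 u in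
  let Rc := fun u => / 2 * gradsq n g N u + N u * Z1 u + M u * Z2 u in
  let vh := vhat v B A N M in
  let nh := fun i u => Hratio v B A N M i u * nv i u - P u - vh i u * Rc u in
  let bh := fun i u => Hratio v B A N M i u * bv i u - Q u - vh i u * S u in
  Rik n gh i k u = nh i u * vh k u + nh k u * vh i u + bh i u + bh k u.
Proof.
  intros Hi Hk Hik Du nv bv Q Rc vh nh bh.
  assert (HG : forall m, (m < n)%nat -> g m u <> 0) by (intros; apply g_nonzero; auto).
  assert (Hw := Hcurv i k u Hi Hk Hik Du).
  rewrite Rik_diag in Hw by (auto; ex_smooth).
  rewrite Rik_diag by (auto; intros;
    first [apply ghat_nonzero | apply ex_pd_ghat | apply ex_pd2_ghat]; auto).
  rewrite recip_rest_sum by auto; unfold diag_term.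
  rewrite (pd_local n D i (dlnH gh i k) (fun u' => dlnH g i k u' + recip_shift_off i k u'))
    by (auto; intros; apply dlnH_ghat_off; auto).
  rewrite (pd_local n D k (dlnH gh k i) (fun u' => dlnH g k i u' + recip_shift_off k i u'))
    by (auto; intros; apply dlnH_ghat_off; auto).
  rewrite (dlnH_ghat_off i k), (dlnH_ghat_off k i), (dlnH_ghat i i), (dlnH_ghat k k) by auto.
  unfold recip_shift_off, recip_shift; compute_pd;
    try ex_smooth; try (apply ex_pd_dlnH; auto); try (apply Hdet; auto).
  rewrite (HNM i u), (HNM k u), (HBA i u), (HBA k u) by auto.
  rewrite (pd_v_lame i k u), (pd_v_lame k i u) by auto.
  unfold nh, bh, nv, bv, Q, Rc, vh.
  replace (S u) with (gradprod n g N B u + T1 u * N u + T2 u * M u + Z1 u * B u + Z2 u * A u - P u)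
    by (rewrite <- HPS by auto; ring).
  rewrite (lap_i_split n g i k N), (lap_i_split n g i k B), (lap_i_split n g k i N),
    (lap_i_split n g k i B) by auto.
  unfold gradsq, gradprod.
  rewrite (sumR_split2 n i k (fun m => / g m u * pd m N u ^ 2)),
    (sumR_split2 n i k (fun m => / g m u * pd m B u ^ 2)),
    (sumR_split2 n i k (fun m => / g m u * pd m N u * pd m B u)) by auto.
  rewrite !(rest2_comm k i).
  rewrite rest_sum_expand.
  (* eliminate w1^i with the curvature hypothesis and conclude by algebra *)
  unfold diag_term in Hw.
  match type of Hw with ?L = _ =>
    assert (Hw1 : w1 i u = L - w1 k u - w2 i u * v k u - w2 k u * v i u) by lra end.
  rewrite Hw1; unfold gh, ghat, Hratio, vhat, Rsqr.
  field; repeat split; auto.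
Qed.


End Sectional.

End Reciprocal.

Theorem theorem3p2
  (n : nat) (D : pt -> Prop) (v g w1 w2 : nat -> fn)
  (B A N M T1 T2 Z1 Z2 P S : fn)
  (HD : open_dom n D)
  (Hsm_v : forall i, (i < n)%nat -> smooth n D (v i))
  (Hsm_g : forall i, (i < n)%nat -> smooth n D (g i))
  (Hsm_w1 : forall i, (i < n)%nat -> smooth n D (w1 i))
  (Hsm_w2 : forall i, (i < n)%nat -> smooth n D (w2 i))
  (Hsm_B : smooth n D B) (Hsm_A : smooth n D A)
  (Hsm_N : smooth n D N) (Hsm_M : smooth n D M)
  (Hsm_T1 : smooth n D T1) (Hsm_T2 : smooth n D T2)
  (Hsm_Z1 : smooth n D Z1) (Hsm_Z2 : smooth n D Z2)
  (Hhyp : strictly_hyperbolic n D v)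
  (HDN : DN_system n D v)
  (Hg : metric_of_system n D v g)
  (Hw1 : affinor n D g w1) (Hw2 : affinor n D g w2)
  (Hcurv : forall i k u, (i < n)%nat -> (k < n)%nat -> i <> k -> D u ->
     Rik n g i k u = w1 i u + w1 k u + w2 i u * v k u + w2 k u * v i u)
  (HBA : conservation_law n D v B A)
  (HNM : conservation_law n D v N M)
  (Hdet : forall u, D u -> B u * M u - A u * N u <> 0)
  (Hden : forall i u, (i < n)%nat -> D u -> M u - N u * v i u <> 0)
  (HT1 : forall i u, (i < n)%nat -> D u -> pd i T1 u = w1 i u * pd i B u)
  (HT2 : forall i u, (i < n)%nat -> D u -> pd i T2 u = w2 i u * pd i B u)
  (HZ1 : forall i u, (i < n)%nat -> D u -> pd i Z1 u = w1 i u * pd i N u)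
  (HZ2 : forall i u, (i < n)%nat -> D u -> pd i Z2 u = w2 i u * pd i N u)
  (HPS : forall u, D u ->
     P u + S u = gradprod n g N B u + T1 u * N u + T2 u * M u
                 + Z1 u * B u + Z2 u * A u) :
  let nv := fun i u => lap_i n g i N u + w1 i u * N u + Z1 u
                       + w2 i u * M u + v i u * Z2 u in
  let bv := fun i u => lap_i n g i B u + w1 i u * B u + T1 u
                       + w2 i u * A u + v i u * T2 u in
  let Q := fun u => / 2 * gradsq n g B u + B u * T1 u + A u * T2 u in
  let Rc := fun u => / 2 * gradsq n g N u + N u * Z1 u + M u * Z2 u in
  let vh := vhat v B A N M in
  let gh := ghat v g B A N M in
  let nh := fun i u => Hratio v B A N M i u * nv i u - P u - vh i u * Rc u in
  let bh := fun i u => Hratio v B A N M i u * bv i u - Q u - vh i u * S u in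
  (forall i k u, (i < n)%nat -> (k < n)%nat -> i <> k -> D u ->
     Rik n gh i k u = nh i u * vh k u + nh k u * vh i u + bh i u + bh k u)
  /\
  (forall i j k l u, (i < n)%nat -> (j < n)%nat -> (k < n)%nat -> (l < n)%nat ->
     D u -> (i = j \/ ~ ((k = i /\ l = j) \/ (k = j /\ l = i))) ->
     Riem n gh i j k l u = 0).
Proof.
  intros nv bv Q Rc vh gh nh bh; split.
  - intros i k u Hi Hk Hik Du; eapply recip_Rik; eassumption.
  - intros i j k l u Hi Hj Hk Hl Du Hc; eapply recip_Riem_zero; eassumption.
Qed.
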